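(* Let $\mathcal{P}_{XY}$ be a probability distribution over $\mathbb{R}^d\times\{\pm1\}$ with marginal distribution $\mathcal{P}_X$ on $\mathbb{R}^d$, let $\mathcal{B}:\mathbb{R}^d\to\mathscr{P}(\mathbb{R}^d)$ be a perturbation set map, and let $\mathcal{F}$ be a hypothesis space of classifiers $f:\mathbb{R}^d\to\{-1,1\}$. Let $S=\{(x_i,y_i)\}_{i=1}^n$ be a set of $n$ i.i.d. samples drawn from $\mathcal{P}_{XY}$. For any function $f\in\mathcal{F}$, with probability at least $1-\delta$ over the random draw of $S$, \[ R^{0/1}_{\mathcal{B}\text{-robust}}(f)\le \mathbb{E}_{x\sim\mathcal{P}_X}\sup_{x'\in\mathcal{B}(x)}\mathbb{I}\big(f(x')\neq f(x)\big)+\hat{R}^{0/1}(f)+Rad_S(\mathcal{F})+3\sqrt{\frac{\log\frac{2}{\delta}}{2n}}. \]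
   Context: The zero-one loss is $l^{0/1}(y',y)=\mathbb{I}[y'\neq y]$. The expected robust classification risk with zero-one loss is $R^{0/1}_{\mathcal{B}\text{-robust}}(f)=\mathbb{E}_{(x,y)\sim\mathcal{P}_{XY}}\sup_{x'\in\mathcal{B}(x)}\mathbb{I}[f(x')\neq y]$. The empirical classification risk with zero-one loss is $\hat{R}^{0/1}(f)=\frac{1}{n}\sum_{i=1}^n\mathbb{I}[f(x_i)\neq y_i]$. The empirical Rademacher complexity is $Rad_S(\mathcal{F})=\frac{1}{n}\mathbb{E}_{\epsilon}\big[\sup_{f\in\mathcal{F}}\sum_{i=1}^n\epsilon_i f(x_i)\big]$, where $\epsilon_1,\dots,\epsilon_n$ are i.i.d. uniform on $\{1,-1\}$. *)

From mathcomp Require Import all_boot all_order all_algebra all_classical all_reals all_analysis.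
Import numFieldNormedType.Exports.
Set Implicit Arguments. Unset Strict Implicit. Unset Printing Implicit Defensive.
Import Order.TTheory GRing.Theory Num.Theory.
Local Open Scope classical_set_scope.
Local Open Scope ring_scope.

(* R^d = 'rV[R]_d equipped with its Borel sigma-algebra (generated by the open sets). *)
Definition Rd (R : realType) (d : nat) := g_sigma_algebraType (@open 'rV[R]_d).

(* Labels / classifier outputs in {-1,+1} are encoded by bool: true = +1, false = -1. *)
Definition pm {R : realType} (b : bool) : R := if b then 1 else -1.

Section defs.
Variables (R : realType) (d : nat).

(* sup_{x' in B(x)} I[f(x') <> y]   (real sup; sup of the empty set is 0) *)
Definition robust_loss (B : Rd R d -> set (Rd R d)) (f : Rd R d -> bool)
  (z : (Rd R d * bool)%type) : R :=
  sup [set ((f x' != z.2)%:R : R) | x' in B z.1].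

Definition adv_loss (B : Rd R d -> set (Rd R d)) (f : Rd R d -> bool)
  (x : Rd R d) : R :=
  sup [set ((f x' != f x)%:R : R) | x' in B x].

Definition robust_risk (P : probability (Rd R d * bool)%type R)
  (B : Rd R d -> set (Rd R d)) (f : Rd R d -> bool) : \bar R :=
  (\int[P]_z (robust_loss B f z)%:E)%E.

(* E_{x ~ P_X} sup_{x' in B(x)} I[f(x') <> f(x)], P_X the marginal of P on R^d *)
Definition adv_term (P : probability (Rd R d * bool)%type R)
  (B : Rd R d -> set (Rd R d)) (f : Rd R d -> bool) : \bar R :=
  (\int[P]_z (adv_loss B f z.1)%:E)%E.

Definition emp_risk (n : nat) (S : 'I_n -> (Rd R d * bool)%type) (f : Rd R d -> bool) : R :=
  n%:R^-1 * \sum_(i < n) ((f (S i).1 != (S i).2)%:R : R).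

(* empirical Rademacher complexity: (1/n) E_eps sup_{f in F} sum_i eps_i f(x_i),
   eps uniform on {-1,1}^n, so E_eps is the average over the 2^n sign vectors. *)
Definition rademacher (n : nat) (S : 'I_n -> (Rd R d * bool)%type)
  (F : set (Rd R d -> bool)) : R :=
  n%:R^-1 * ((2 ^ n)%:R^-1 *
    \sum_(eps : {ffun 'I_n -> bool})
      sup [set (\sum_(i < n) pm (eps i) * pm (f (S i).1)) | f in F]).

End defs.

Definition iid_sample {R : realType} (dO dT : measure_display)
  (Omega : measurableType dO) (T : measurableType dT)
  (Q : probability Omega R) (P : probability T R) (n : nat)
  (Z : 'I_n -> Omega -> T) : Prop :=
  [/\ (forall i, measurable_fun setT (Z i)),
      (forall i (A : set T), measurable A -> Q (Z i @^-1` A) = P A) &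
      (forall A : 'I_n -> set T, (forall i, measurable (A i)) ->
         Q (\bigcap_(i in [set: 'I_n]) (Z i @^-1` A i))
         = (\prod_(i < n) Q (Z i @^-1` A i))%E)].

(** Pointwise, sup_{x' in B x} I[f x' <> y] <= sup_{x' in B x} I[f x' <> f x] + I[f x <> y]:
    if [f x = y] both sups coincide, otherwise the last indicator is 1.  Integrating, the
    robust risk is at most the adversarial term plus p = P[f x <> y].  The misclassification
    indicators of the sample are i.i.d. Bernoulli(p), so by a Chernoff bound the empirical
    risk falls below p - t with probability at most exp (- n t^2 / 4), which is at most
    delta for t = 3 sqrt (ln (2 / delta) / 2n).  Finally the Rademacher complexity is
    nonnegative, because for a fixed f the random signs average out to 0. *)

From mathcomp Require Import all_boot all_order all_algebra all_classical all_reals all_analysis.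
From mathcomp Require Import ring lra measurable_realfun.
Import numFieldNormedType.Exports.
Import Order.TTheory GRing.Theory Num.Theory.
Set Implicit Arguments. Unset Strict Implicit. Unset Printing Implicit Defensive.
Local Open Scope classical_set_scope.
Local Open Scope ring_scope.

Lemma sup_ge0_le1 (R : realType) (S : set R) :
  (forall x, S x -> 0 <= x <= 1) -> 0 <= sup S <= 1.
Proof.
move=> S01; have [->|/set0P[x Sx]] := eqVneq S set0; first by rewrite sup0 lexx ler01.
have ubS : has_ubound S by exists 1 => y /S01 /andP[].
have /andP[x0 _] := S01 x Sx.
rewrite (le_trans x0 (ub_le_sup ubS Sx)) /=.
by apply: ge_sup; [exists x | move=> y /S01 /andP[]].
Qed.

Lemma sup_indicator_ge0_le1 (R : realType) (T : Type) (A : set T) (b : T -> bool) :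
  0 <= sup [set ((b x)%:R : R) | x in A] <= 1.
Proof. by apply: sup_ge0_le1 => _ [x _ <-]; case: (b x); rewrite ?lexx ?ler01. Qed.

Section robust_loss.
Variables (R : realType) (d : nat) (B : Rd R d -> set (Rd R d)) (f : Rd R d -> bool).

Definition misclassified : set (Rd R d * bool) := [set z | f z.1 != z.2].

Lemma robust_loss_le z :
  robust_loss B f z <= adv_loss B f z.1 + ((f z.1 != z.2)%:R : R).
Proof.
case: z => x y /=; have [<-|_] := eqVneq (f x) y; first by rewrite addr0.
have /andP[_ rl1] := sup_indicator_ge0_le1 R (B x) (fun x' => f x' != y).
have /andP[al0 _] := sup_indicator_ge0_le1 R (B x) (fun x' => f x' != f x).
by apply: le_trans rl1 _; rewrite lerDr.
Qed.

Lemma mem_misclassified z : (z \in misclassified) = (f z.1 != z.2).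
Proof. by apply/idP/idP => [/set_mem|/mem_set]. Qed.

Hypothesis mf : measurable_fun setT f.

Lemma measurable_misclassified : measurable misclassified.
Proof.
have -> : misclassified = ((f \o fst) @^-1` [set true] `&` snd @^-1` [set false]) `|`
                          ((f \o fst) @^-1` [set false] `&` snd @^-1` [set true]).
  apply/seteqP; split => -[x y] /=; rewrite /misclassified /=.
    by case: (f x); case: y => //= _; [left|right].
  by case: (f x); case: y => //= -[] [].
have mff : measurable_fun setT (f \o @fst (Rd R d) bool).
  by apply: measurableT_comp => //; exact: measurable_fst.
by apply: measurableU; apply: measurableI; rewrite -[X in measurable X]setTI;
  [exact: mff|exact: measurable_snd|exact: mff|exact: measurable_snd].
Qed.

Lemma robust_risk_le (P : probability (Rd R d * bool)%type R) :
  measurable_fun setT (robust_loss B f) -> measurable_fun setT (adv_loss B f) ->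
  (robust_risk P B f <= adv_term P B f + P misclassified)%E.
Proof.
move=> mrl mal.
have rl0 z : 0 <= robust_loss B f z.
  by case/andP: (sup_indicator_ge0_le1 R (B z.1) (fun x' => f x' != z.2)).
have al0 x : 0 <= adv_loss B f x.
  by case/andP: (sup_indicator_ge0_le1 R (B x) (fun x' => f x' != f x)).
have mal1 : measurable_fun setT (fun z : Rd R d * bool => adv_loss B f z.1).
  by apply: measurableT_comp => //; exact: measurable_fst.
have mi : measurable_fun setT (\1_misclassified : _ -> R).
  by apply: measurable_indic; exact: measurable_misclassified.
rewrite -(setIT misclassified) -integral_indic //; last exact: measurable_misclassified.
rewrite /robust_risk /adv_term -ge0_integralD //; last 3 first.
- by move=> z _; rewrite lee_fin.
- exact/measurable_EFinP.
- exact/measurable_EFinP.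
apply: ge0_le_integral => //.
- by move=> z _; rewrite lee_fin.
- exact/measurable_EFinP.
- by apply: emeasurable_funD; exact/measurable_EFinP.
- by move=> z _; rewrite lee_fin indicE mem_misclassified robust_loss_le.
Qed.

End robust_loss.

Lemma sum_ffun_pm (R : realType) n (i : 'I_n) :
  \sum_(eps : {ffun 'I_n -> bool}) (pm (eps i) : R) = 0.
Proof.
pose flip (eps : {ffun 'I_n -> bool}) := [ffun j => if j == i then ~~ eps j else eps j].
have flipK : involutive flip.
  by move=> e; apply/ffunP => j; rewrite !ffunE; case: eqP => // _; rewrite negbK.
have : \sum_(eps : {ffun 'I_n -> bool}) (pm (eps i) : R) =
       - \sum_(eps : {ffun 'I_n -> bool}) (pm (eps i) : R).
  rewrite [LHS](reindex_inj (inv_inj flipK)) -sumrN; apply: eq_bigr => e _.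
  by rewrite ffunE eqxx; case: (e i); rewrite /pm ?opprK.
lra.
Qed.

Lemma rademacher_ge0 (R : realType) d n (S : 'I_n -> (Rd R d * bool)%type)
    (F : set (Rd R d -> bool)) f :
  F f -> 0 <= rademacher S F.
Proof.
move=> Ff; rewrite /rademacher !mulr_ge0 ?invr_ge0 //.
have corr0 :
    \sum_(eps : {ffun 'I_n -> bool}) \sum_(i < n) pm (eps i) * pm (f (S i).1) = 0 :> R.
  by rewrite exchange_big big1 // => i _; rewrite -mulr_suml sum_ffun_pm mul0r.
rewrite -[leLHS]corr0.
apply: ler_sum => eps _; apply: ub_le_sup; last by exists f.
exists n%:R => _ [g _ <-]; apply: le_trans (_ : _ <= \sum_(i < n) 1) _.
  by apply: ler_sum => i _; rewrite /pm; case: (eps i); case: (g _); lra.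
by rewrite sumr_const card_ord.
Qed.

Lemma expRN_le (R : realType) (x : R) : 0 <= x -> expR (- x) <= 1 - x + x ^+ 2.
Proof.
move=> x0; have := expR_ge1Dx x; have := expRxMexpNx_1 x; have := expR_ge0 (- x); nra.
Qed.

Section bernoulli_lower_tail.
Variables (R : realType) (n : nat).

Lemma sum_ffun_prod_bool (a b : R) :
  \sum_(g : {ffun 'I_n -> bool}) \prod_(i < n) (if g i then a else b) = (a + b) ^+ n.
Proof.
rewrite -(bigA_distr_bigA (fun _ (c : bool) => if c then a else b)) /=.
by under eq_bigr do rewrite big_bool /=; rewrite prodr_const card_ord.
Qed.

Lemma prod_bool_tilt (a b l : R) (g : {ffun 'I_n -> bool}) :
  \prod_(i < n) (if g i then a * expR (- l) else b) =
  \prod_(i < n) (if g i then a else b) * expR (- (l * \sum_(i < n) (g i)%:R)).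
Proof.
rewrite mulr_sumr -sumrN expR_sum -big_split /=; apply: eq_bigr => i _.
by case: (g i); rewrite ?mulr1 ?mulr0 ?oppr0 ?expR0 ?mulr1.
Qed.

(* Chernoff's bound with the exponential tilt [l = t / 2]. *)
Lemma bernoulli_lower_tail (p t : R) : 0 <= p <= 1 -> 0 < t ->
  \sum_(g : {ffun 'I_n -> bool} | \sum_(i < n) ((g i)%:R : R) < n%:R * (p - t))
     \prod_(i < n) (if g i then p else 1 - p)
  <= expR (- (n%:R * t ^+ 2 / 4)).
Proof.
move=> /andP[p0 p1] t0; set l := t / 2; set s := expR (- l).
have l0 : 0 < l by rewrite /l divr_gt0.
have s0 : 0 <= s := expR_ge0 _.
have s_le : s <= 1 - l + l ^+ 2 by apply: expRN_le; exact: ltW.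
pose tilted (g : {ffun 'I_n -> bool}) := \prod_(i < n) (if g i then p * s else 1 - p).
have tilted0 g : 0 <= tilted g by apply: prodr_ge0 => i _; case: (g i); nra.
pose bad (g : {ffun 'I_n -> bool}) := \sum_(i < n) ((g i)%:R : R) < n%:R * (p - t).
have tail_le : \sum_(g | bad g) \prod_(i < n) (if g i then p else 1 - p)
               <= expR (l * (n%:R * (p - t))) * \sum_g tilted g.
  rewrite mulr_sumr [leRHS](bigID bad) /=.
  rewrite -[leLHS]addr0 lerD //; last by apply: sumr_ge0 => g _; rewrite mulr_ge0 ?expR_ge0.
  apply: ler_sum => g bad_g; rewrite /tilted prod_bool_tilt mulrCA -expRD.
  have w0 : 0 <= \prod_(i < n) (if g i then p else 1 - p).
    by apply: prodr_ge0 => i _; case: (g i); lra.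
  rewrite -{1}[\prod_(i < n) _]mulr1 ler_wpM2l //.
  by apply: le_trans (expR_ge1Dx _); rewrite lerDl subr_ge0 ler_pM2l // ltW.
have mgf_le : \sum_g tilted g <= expR (n%:R * (p * s - p)).
  rewrite sum_ffun_prod_bool expRM_natl lerXn2r ?nnegrE ?expR_ge0 //; first nra.
  by apply: le_trans (expR_ge1Dx _); lra.
apply: (le_trans tail_le); apply: le_trans (ler_wpM2l (expR_ge0 _) mgf_le) _.
rewrite -expRD ler_expR.
have exponent_le : l * (p - t) + (p * s - p) <= - (t ^+ 2 / 4).
  have tilt_gain : p * (s - 1 + l) <= l ^+ 2 by nra.
  have -> : - (t ^+ 2 / 4) = l ^+ 2 - l * t by rewrite /l; field.
  lra.
have n0 : 0 <= (n%:R : R) by [].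
nra.
Qed.

End bernoulli_lower_tail.

Section iid_lower_tail.
Variables (R : realType) (dO dT : measure_display) (Omega : measurableType dO)
  (T : measurableType dT) (Q : probability Omega R) (P : probability T R)
  (n : nat) (Z : 'I_n -> Omega -> T) (E : set T) (p t : R).
Hypotheses (iidZ : iid_sample Q P Z) (mE : measurable E) (PE : P E = p%:E).

Definition low_frequency_event : set Omega :=
  [set w | \sum_(i < n) ((Z i w \in E)%:R : R) < n%:R * (p - t)].

Definition cylinder (g : {ffun 'I_n -> bool}) : set Omega :=
  \bigcap_(i in [set: 'I_n]) Z i @^-1` (if g i then E else ~` E).

Lemma cylinder_hits g w : cylinder g w -> forall i, (Z i w \in E) = g i.
Proof.
move=> gw i; have := gw i Logic.I; case: (g i) => /= Zi; first exact/mem_set.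
by apply/negbTE/negP => /set_mem.
Qed.

Lemma low_frequency_eventE : low_frequency_event =
  \bigcup_(g in [set g : {ffun 'I_n -> bool} | \sum_(i < n) ((g i)%:R : R) < n%:R * (p - t)])
    cylinder g.
Proof.
apply/seteqP; split => w.
  move=> low; exists [ffun i => Z i w \in E].
    by rewrite /= (eq_bigr (fun i => ((Z i w \in E)%:R : R))) // => i _; rewrite ffunE.
  move=> i _ /=; rewrite ffunE; case: ifP => /= [/set_mem //|Zi].
  by move=> /mem_set; rewrite Zi.
move=> [g bad_g gw]; rewrite /low_frequency_event /=.
by rewrite (eq_bigr (fun i => ((g i)%:R : R))) // => i _; rewrite (cylinder_hits gw).
Qed.

Lemma measurable_cylinder g : measurable (cylinder g).
Proof.
case: iidZ => mZ _ _; apply: fin_bigcap_measurable; first exact: finite_finset.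
move=> i _; rewrite -[_ @^-1` _]setTI; apply: mZ => //.
by case: (g i) => //; exact: measurableC.
Qed.

Lemma measure_cylinder g :
  Q (cylinder g) = (\prod_(i < n) (if g i then p else 1 - p))%:E.
Proof.
case: iidZ => _ lawZ indepZ; rewrite /cylinder indepZ; last first.
  by move=> i; case: (g i) => //; exact: measurableC.
rewrite -prodEFin; apply: eq_bigr => i _.
by rewrite lawZ; case: (g i) => //; [|exact: measurableC]; rewrite probability_setC // PE.
Qed.

Lemma measurable_low_frequency_event : measurable low_frequency_event.
Proof.
rewrite low_frequency_eventE; apply: fin_bigcup_measurable; first exact: finite_finset.
by move=> g _; exact: measurable_cylinder.
Qed.

Lemma low_frequency_event_le : 0 < t ->
  (Q low_frequency_event <= (expR (- (n%:R * t ^+ 2 / 4)))%:E)%E.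
Proof.
move=> t0; have p01 : 0 <= p <= 1 by rewrite -!lee_fin -PE measure_ge0 probability_le1.
pose low (g : {ffun 'I_n -> bool}) := \sum_(i < n) ((g i)%:R : R) < n%:R * (p - t).
apply: le_trans (content_sub_fsum (D := [set` low]) (A_ := cylinder) Q finite_finset
  (fun g _ => measurable_cylinder g) measurable_low_frequency_event _) _.
  by rewrite low_frequency_eventE.
rewrite -(@bigfs _ _ _ _ (enum {ffun 'I_n -> bool})) ?enum_uniq //; last first.
  by move=> g _; rewrite mem_enum.
rewrite big_enum_cond /=.
under eq_bigr do rewrite measure_cylinder.
by rewrite sumEFin lee_fin bernoulli_lower_tail.
Qed.

End iid_lower_tail.

Lemma ln_2_div_gt0 (R : realType) (delta : R) : 0 < delta < 1 -> 0 < ln (2 / delta).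
Proof.
by move=> /andP[d0 d1]; rewrite ln_gt0 // ltr_pdivlMr // mul1r (lt_trans d1) // ltr1n.
Qed.

(* With [t = 3 sqrt (L / 2n)] the exponent [n t^2 / 4] is [9 L / 8 >= L = ln (2 / delta)]. *)
Lemma expR_deviation_le (R : realType) (n : nat) (delta : R) :
  (0 < n)%N -> 0 < delta < 1 ->
  expR (- (n%:R * (3 * Num.sqrt (ln (2 / delta) / (2 * n%:R))) ^+ 2 / 4)) <= delta.
Proof.
move=> n0 delta01; have L0 := ln_2_div_gt0 delta01.
case/andP: delta01 => d0 d1; set L := ln (2 / delta) in L0 *.
have -> : n%:R * (3 * Num.sqrt (L / (2 * n%:R))) ^+ 2 / 4 = 9 / 8 * L.
  rewrite exprMn sqr_sqrtr; last by rewrite divr_ge0 ?mulr_ge0 // ltW.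
  by field; rewrite pnatr_eq0 -lt0n.
apply: le_trans (_ : expR (- L) <= delta).
  by rewrite ler_expR; lra.
by rewrite expRN lnK ?posrE ?divr_gt0 // invf_div; lra.
Qed.

Theorem theorem1 (R : realType) (d n : nat) (dO : measure_display)
  (Omega : measurableType dO) (Q : probability Omega R)
  (P : probability (Rd R d * bool)%type R)
  (B : Rd R d -> set (Rd R d)) (F : set (Rd R d -> bool))
  (Z : 'I_n -> Omega -> (Rd R d * bool)%type) (delta : R) :
  (0 < n)%N -> 0 < delta < 1 ->
  iid_sample Q P Z ->
  forall f : Rd R d -> bool, F f ->
  measurable_fun setT f ->
  measurable_fun setT (robust_loss B f) ->
  measurable_fun setT (adv_loss B f) ->
  exists2 A : set Omega, measurable A /\ ((1 - delta)%:E <= Q A)%E &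
    forall w, A w ->
      (robust_risk P B f <=
        adv_term P B f
        + (emp_risk (fun i => Z i w) f + rademacher (fun i => Z i w) F
           + 3 * Num.sqrt (ln (2 / delta) / (2 * n%:R)))%:E)%E.
Proof.
move=> n0 delta01 iidZ f Ff mf mrl mal.
set t := 3 * Num.sqrt _.
have mE := measurable_misclassified mf.
have PE := esym (fineK (fin_num_measure P _ mE)); set p := fine _ in PE.
have t0 : 0 < t by rewrite mulr_gt0 ?sqrtr_gt0 ?divr_gt0 ?ln_2_div_gt0 ?mulr_gt0 ?ltr0n.
set bad := low_frequency_event Z (misclassified f) p t.
have mbad : measurable bad := measurable_low_frequency_event p t iidZ mE.
exists (~` bad).
  split; first exact: measurableC.
  rewrite probability_setC // -(fineK (fin_num_measure Q _ mbad)) -EFinB lee_fin lerB //.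
  rewrite -lee_fin fineK ?fin_num_measure //.
  apply: le_trans (low_frequency_event_le iidZ mE PE t0) _.
  by rewrite lee_fin expR_deviation_le.
move=> w /negP; rewrite /bad /low_frequency_event /= -leNgt => not_low.
have emp_count : n%:R * emp_risk (fun i => Z i w) f =
                 \sum_(i < n) ((Z i w \in misclassified f)%:R : R).
  rewrite /emp_risk mulrA divff ?pnatr_eq0 -?lt0n // mul1r.
  by apply: eq_bigr => i _; rewrite mem_misclassified.
have n_gt0 : 0 < (n%:R : R) by rewrite ltr0n.
have p_le : p <= emp_risk (fun i => Z i w) f + t by nra.
apply: le_trans (robust_risk_le mf P mrl mal) _; rewrite PE leeD // lee_fin.
have := rademacher_ge0 (fun i => Z i w) Ff; lra.
Qed.
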